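(* Let $H$ be a finite-dimensional real Hilbert space, $f:H\to\mathbb{R}\cup\{+\infty\}$ a proper lower semicontinuous function and $\bar x\in\operatorname{dom}f$. The following are equivalent: (i) $\bar x$ is a strict local minimizer of order two for $f$; (ii) $0\in\partial_pf(\bar x)$ and there exists $\beta>0$ such that $f''_-(\bar x,0,h)\ge\beta$ holds uniformly with respect to $h\in S_H$; (iii) $0\in\partial_pf(\bar x)$ and there exists $\beta>0$ such that $f''_-(\bar x,0,h)\ge\beta$ for all $h\in S_H$; (iv) $0\in\partial_pf(\bar x)$ and $f''_-(\bar x,0,h)>0$ for all $h\in S_H$.
   Context: $S_H$ and $B_H$ are the unit sphere and closed unit ball of $H$; $B(x,\delta)$ is the open ball. $\bar x$ is a strict local minimizer of order two for $f$ if there exist $\beta,\delta>0$ with $f(x)\ge f(\bar x)+\frac{\beta}{2}\|x-\bar x\|^2$ for all $x\in B(\bar x,\delta)$. Proximal subdifferential: $\zeta\in\partial_p f(x)$ iff there exist $\sigma,\delta>0$ with $f(y)\ge f(x)+\langle\zeta,y-x\rangle-\frac{\sigma}{2}\|y-x\|^2$ whenever $\|y-x\|<\delta$. $\Delta_2 f(\bar x,p,t,u):=\frac{f(\bar x+tu)-f(\bar x)-t\langle p,u\rangle}{\frac12t^2}$, $f''_-(\bar x,p,h):=\liminf_{h'\to h,\,t\downarrow0}\Delta_2f(\bar x,p,t,h')$. ''$f''_-(\bar x,p,h)\ge\beta$ holds uniformly with respect to $h\in A$'' means: for every $\varepsilon>0$ there exists $\delta>0$ such that $\Delta_2f(\bar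 x,p,t,h)\ge\beta-\varepsilon$ for all $t\in(0,\delta)$ and all $h\in A+\delta B_H$. *)

From Stdlib Require Import Reals Lra Classical ClassicalEpsilon.
From Stdlib Require Vectors.Fin.
Open Scope R_scope.

(* Every finite-dimensional real Hilbert space is isometrically isomorphic to
   R^n with the standard inner product; we take H := Fin.t n -> R. *)
Definition vec (n : nat) : Type := Fin.t n -> R.

Fixpoint fsum (n : nat) : (Fin.t n -> R) -> R :=
  match n return (Fin.t n -> R) -> R with
  | O => fun _ => 0
  | S m => fun g => g Fin.F1 + fsum m (fun i => g (Fin.FS i))
  end.

Definition vadd {n} (u v : vec n) : vec n := fun i => u i + v i.
Definition vsub {n} (u v : vec n) : vec n := fun i => u i - v i.
Definition vscal {n} (a : R) (u : vec n) : vec n := fun i => a * u i.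
Definition vzero {n} : vec n := fun _ => 0.
Definition inner {n} (u v : vec n) : R := fsum n (fun i => u i * v i).
Definition norm {n} (u : vec n) : R := sqrt (inner u u).

Definition unit_sphere {n} (h : vec n) : Prop := norm h = 1.

Inductive Rbar : Type := Fin (r : R) | PInfty | MInfty.

Definition Rbar_le (a b : Rbar) : Prop :=
  match a, b with
  | MInfty, _ => True
  | _, PInfty => True
  | Fin x, Fin y => x <= y
  | _, _ => False
  end.
Definition Rbar_lt (a b : Rbar) : Prop := Rbar_le a b /\ a <> b.

(* real part (used only at points where the value is finite) *)
Definition real (a : Rbar) : R := match a with Fin x => x | _ => 0 end.

Definition Rbar_addR (a : Rbar) (r : R) : Rbar :=
  match a with Fin x => Fin (x + r) | PInfty => PInfty | MInfty => MInfty end.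
(* multiplication by a (positive) real scalar *)
Definition Rbar_mulR (c : R) (a : Rbar) : Rbar :=
  match a with Fin x => Fin (c * x) | PInfty => PInfty | MInfty => MInfty end.

Definition is_lub_Rbar (E : Rbar -> Prop) (l : Rbar) : Prop :=
  (forall x, E x -> Rbar_le x l) /\
  (forall b, (forall x, E x -> Rbar_le x b) -> Rbar_le l b).
Definition is_glb_Rbar (E : Rbar -> Prop) (l : Rbar) : Prop :=
  (forall x, E x -> Rbar_le l x) /\
  (forall b, (forall x, E x -> Rbar_le b x) -> Rbar_le b l).
Definition Rbar_sup (E : Rbar -> Prop) : Rbar :=
  epsilon (inhabits PInfty) (is_lub_Rbar E).
Definition Rbar_inf (E : Rbar -> Prop) : Rbar :=
  epsilon (inhabits PInfty) (is_glb_Rbar E).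

Definition in_dom {n} (f : vec n -> Rbar) (x : vec n) : Prop :=
  exists r, f x = Fin r.

Definition proper {n} (f : vec n -> Rbar) : Prop :=
  (forall x, f x <> MInfty) /\ (exists x, in_dom f x).

Definition lsc {n} (f : vec n -> Rbar) : Prop :=
  forall x (r : R), Rbar_lt (Fin r) (f x) ->
    exists delta, delta > 0 /\
      forall y, norm (vsub y x) < delta -> Rbar_lt (Fin r) (f y).

Definition strict_local_min_order2 {n} (f : vec n -> Rbar) (xb : vec n) : Prop :=
  exists beta delta, beta > 0 /\ delta > 0 /\
    forall x, norm (vsub x xb) < delta ->
      Rbar_le (Fin (real (f xb) + beta / 2 * (norm (vsub x xb))^2)) (f x).

Definition prox_subdiff {n} (f : vec n -> Rbar) (x zeta : vec n) : Prop :=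
  in_dom f x /\
  exists sigma delta, sigma > 0 /\ delta > 0 /\
    forall y, norm (vsub y x) < delta ->
      Rbar_le (Fin (real (f x) + inner zeta (vsub y x)
                    - sigma / 2 * (norm (vsub y x))^2)) (f y).

Definition Delta2 {n} (f : vec n -> Rbar) (xb p : vec n) (t : R) (u : vec n) : Rbar :=
  Rbar_mulR (/ (t^2 / 2))
    (Rbar_addR (f (vadd xb (vscal t u))) (- real (f xb) - t * inner p u)).

(* lower second order directional derivative
   f''_-(xb,p,h) = liminf_{h'->h, t downarrow 0} Delta2 f(xb,p,t,h')
                 = sup_{delta>0} inf { Delta2 f(xb,p,t,h') : 0<t<delta, |h'-h|<delta } *)
Definition lower_sod {n} (f : vec n -> Rbar) (xb p h : vec n) : Rbar :=
  Rbar_sup (fun v => exists delta, delta > 0 /\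
    v = Rbar_inf (fun w => exists t h', 0 < t < delta /\
                             norm (vsub h' h) < delta /\ w = Delta2 f xb p t h')).

(* "f''_-(xb,p,h) >= beta holds uniformly with respect to h in A":
   forall eps>0 exists delta>0, Delta2 f(xb,p,t,h) >= beta - eps
   for all t in (0,delta) and all h in A + delta B_H *)
Definition uniform_sod_ge {n} (f : vec n -> Rbar) (xb p : vec n)
    (beta : R) (A : vec n -> Prop) : Prop :=
  forall eps, eps > 0 -> exists delta, delta > 0 /\
    forall t h, 0 < t < delta ->
      (exists a b, A a /\ norm b <= 1 /\ h = vadd a (vscal delta b)) ->
      Rbar_le (Fin (beta - eps)) (Delta2 f xb p t h).

(* Write x = xb + t h with t = |x - xb| and h on the unit sphere, so that
   f(x) >= f(xb) + c/2 |x - xb|^2 is the same as Delta2 f(xb,0,t,h) >= c.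
   (i) => (ii): quadratic growth gives Delta2 f(xb,0,t,h) >= beta |h|^2, and |h| is
   close to 1 when h is close to the sphere; 0 is a proximal subgradient since xb is a
   local minimizer. (ii) => (iii) => (iv) are immediate. (iv) => (i): if quadratic growth
   failed for every constant, there would be t_k -> 0 and unit h_k with
   Delta2 f(xb,0,t_k,h_k) < 1/(k+1); by compactness of the sphere the h_k cluster at
   some unit h, and then f''_-(xb,0,h) <= 0. *)

From Stdlib Require Import Reals Lra Lia Classical ClassicalEpsilon FunctionalExtensionality.
Open Scope R_scope.

Lemma fsum_ext n (g h : Fin.t n -> R) : (forall i, g i = h i) -> fsum n g = fsum n h.
Proof. intros H. f_equal. apply functional_extensionality; auto. Qed.

Lemma fsum_add n (g h : Fin.t n -> R) : fsum n (fun i => g i + h i) = fsum n g + fsum n h.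
Proof.
  revert g h; induction n as [|n IH]; intros g h; simpl; [lra|].
  rewrite (IH (fun i => g (Fin.FS i)) (fun i => h (Fin.FS i))). lra.
Qed.

Lemma fsum_scal n c (g : Fin.t n -> R) : fsum n (fun i => c * g i) = c * fsum n g.
Proof.
  revert g; induction n as [|n IH]; intros g; simpl; [lra|].
  rewrite (IH (fun i => g (Fin.FS i))). lra.
Qed.

Lemma fsum_0 n : fsum n (fun _ => 0) = 0.
Proof. induction n as [|n IH]; simpl; [|rewrite IH]; lra. Qed.

Lemma fsum_le n (g h : Fin.t n -> R) : (forall i, g i <= h i) -> fsum n g <= fsum n h.
Proof.
  revert g h; induction n as [|n IH]; intros g h H; simpl; [lra|].
  pose proof (IH (fun i => g (Fin.FS i)) (fun i => h (Fin.FS i)) (fun i => H (Fin.FS i))).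
  pose proof (H Fin.F1). lra.
Qed.

Lemma fsum_ge0 n (g : Fin.t n -> R) : (forall i, 0 <= g i) -> 0 <= fsum n g.
Proof. intros H. rewrite <- (fsum_0 n). apply fsum_le. auto. Qed.

Lemma fsum_ge_term n (g : Fin.t n -> R) : (forall i, 0 <= g i) -> forall i, g i <= fsum n g.
Proof.
  intros Hg i. revert g Hg. induction i as [m|m i IH]; intros g Hg; simpl.
  - pose proof (fsum_ge0 m (fun i => g (Fin.FS i)) (fun i => Hg (Fin.FS i))). lra.
  - pose proof (IH (fun i => g (Fin.FS i)) (fun i => Hg (Fin.FS i))). pose proof (Hg Fin.F1).
    simpl in *. lra.
Qed.

Lemma Un_cv_const (c : R) : Un_cv (fun _ => c) c.
Proof.
  intros e He. exists 0%nat. intros. unfold R_dist.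
  rewrite Rminus_diag, Rabs_R0. lra.
Qed.

Lemma Un_cv_fsum n (g : nat -> Fin.t n -> R) (l : Fin.t n -> R) :
  (forall i, Un_cv (fun k => g k i) (l i)) -> Un_cv (fun k => fsum n (g k)) (fsum n l).
Proof.
  revert g l; induction n as [|n IH]; intros g l H; simpl.
  - apply Un_cv_const.
  - apply CV_plus; [apply H|].
    apply (IH (fun k i => g k (Fin.FS i)) (fun i => l (Fin.FS i))). intros i; apply H.
Qed.

Lemma inner_ge0 n (u : vec n) : 0 <= inner u u.
Proof. apply fsum_ge0. intros i. nra. Qed.

Lemma norm_ge0 n (u : vec n) : 0 <= norm u.
Proof. apply sqrt_pos. Qed.

Lemma norm_pow2 n (u : vec n) : norm u ^ 2 = inner u u.
Proof. unfold norm. rewrite <- Rsqr_pow2. apply Rsqr_sqrt, inner_ge0. Qed.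

Lemma norm_lt_iff n (u : vec n) d : 0 < d -> (norm u < d <-> inner u u < d ^ 2).
Proof. intros Hd. rewrite <- norm_pow2. pose proof (norm_ge0 n u). split; intros; nra. Qed.

Lemma inner_vscal n a (u : vec n) : inner (vscal a u) (vscal a u) = a ^ 2 * inner u u.
Proof. unfold inner, vscal. rewrite <- fsum_scal. apply fsum_ext. intros; ring. Qed.

Lemma norm_vscal n a (u : vec n) : norm (vscal a u) = Rabs a * norm u.
Proof.
  unfold norm. rewrite inner_vscal, <- Rsqr_pow2.
  rewrite sqrt_mult by (apply Rle_0_sqr || apply inner_ge0).
  rewrite sqrt_Rsqr_abs. reflexivity.
Qed.

Lemma inner_vzero_l n (u : vec n) : inner vzero u = 0.
Proof. unfold inner, vzero. transitivity (fsum n (fun _ => 0)); [apply fsum_ext; intros; ring | apply fsum_0]. Qed.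

Lemma coord_sq_le_inner n (u : vec n) i : u i * u i <= inner u u.
Proof. apply (fsum_ge_term n (fun i => u i * u i)). intros; nra. Qed.

Lemma norm_vsub_eq0 n (x y : vec n) : norm (vsub x y) = 0 -> x = y.
Proof.
  intros H. assert (H0 : inner (vsub x y) (vsub x y) = 0) by (rewrite <- norm_pow2, H; ring).
  apply functional_extensionality. intros i. pose proof (coord_sq_le_inner n (vsub x y) i).
  unfold vsub in *. nra.
Qed.

Lemma vsub_vadd_vscal n (x u : vec n) t : vsub (vadd x (vscal t u)) x = vscal t u.
Proof. apply functional_extensionality; intros i. unfold vsub, vadd, vscal. ring. Qed.

Lemma inner_near_unit_sphere n (a b : vec n) d :
  unit_sphere a -> norm b <= 1 -> 0 <= d <= 1/2 ->
  (1 - d) ^ 2 <= inner (vadd a (vscal d b)) (vadd a (vscal d b)) <= 4.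
Proof.
  unfold unit_sphere. intros Ha Hb Hd.
  assert (Haa : inner a a = 1) by (rewrite <- norm_pow2, Ha; ring).
  assert (Hbb : inner b b <= 1) by (rewrite <- norm_pow2; pose proof (norm_ge0 n b); nra).
  pose proof (inner_ge0 n b).
  (* pointwise: (a + d b)^2 = (1-d) a^2 + (d^2-d) b^2 + d (a+b)^2 <= 2 a^2 + 2 d^2 b^2 *)
  assert (Hlo : fsum n (fun i => (1-d) * (a i * a i) + (d^2-d) * (b i * b i))
                <= inner (vadd a (vscal d b)) (vadd a (vscal d b))).
  { apply fsum_le. intros i. unfold vadd, vscal.
    assert (0 <= d * ((a i + b i) * (a i + b i))) by (apply Rmult_le_pos; [lra | apply Rle_0_sqr]).
    assert (E : (a i + d * b i) * (a i + d * b i) - ((1-d) * (a i * a i) + (d^2-d) * (b i * b i))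
                = d * ((a i + b i) * (a i + b i))) by ring.
    lra. }
  assert (Hup : inner (vadd a (vscal d b)) (vadd a (vscal d b))
                <= fsum n (fun i => 2 * (a i * a i) + (2 * d^2) * (b i * b i))).
  { apply fsum_le. intros i. unfold vadd, vscal. pose proof (Rle_0_sqr (a i - d * b i)).
    unfold Rsqr in *. nra. }
  rewrite fsum_add, !fsum_scal in Hlo, Hup. fold (inner a a) (inner b b) in Hlo, Hup.
  rewrite Haa in Hlo, Hup.
  assert (0 <= (d - d^2) * (1 - inner b b)) by (apply Rmult_le_pos; nra).
  assert (d^2 * inner b b <= 1) by nra.
  split; nra.
Qed.

Lemma Rbar_le_trans a b c : Rbar_le a b -> Rbar_le b c -> Rbar_le a c.
Proof. destruct a, b, c; simpl; intros; auto; try lra; contradiction. Qed.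

Lemma Rbar_lt_not_le a b : Rbar_lt a b -> ~ Rbar_le b a.
Proof.
  intros [Hab Hne] Hba. apply Hne.
  destruct a, b; simpl in *; try contradiction; f_equal; lra.
Qed.

Lemma Rbar_not_lt_le a b : ~ Rbar_lt a b -> Rbar_le b a.
Proof.
  unfold Rbar_lt. destruct a as [x| |], b as [y| |]; simpl; intros H; auto;
    try (exfalso; apply H; split; [simpl; auto | discriminate]).
  destruct (Rle_lt_dec y x); auto.
  exfalso; apply H; split; [simpl; lra | intro E; inversion E; lra].
Qed.

Lemma Rbar_lt_Fin_le a b v : a < b -> Rbar_le (Fin b) v -> Rbar_lt (Fin a) v.
Proof. intros Hab Hb. split; [destruct v; simpl in *; auto; lra | intros <-; simpl in Hb; lra]. Qed.

Lemma Rbar_le_Fin_eps b v : (forall eps, eps > 0 -> Rbar_le (Fin (b - eps)) v) -> Rbar_le (Fin b) v.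
Proof.
  intros H. destruct v as [x| |]; simpl; auto.
  - destruct (Rle_lt_dec b x); auto. specialize (H ((b - x) / 2)). simpl in H. lra.
  - apply (H 1). lra.
Qed.

Definition Rbar_opp (a : Rbar) : Rbar :=
  match a with Fin x => Fin (- x) | PInfty => MInfty | MInfty => PInfty end.

Lemma Rbar_opp_involutive a : Rbar_opp (Rbar_opp a) = a.
Proof. destruct a; simpl; auto. rewrite Ropp_involutive. reflexivity. Qed.

Lemma Rbar_opp_le a b : Rbar_le (Rbar_opp a) (Rbar_opp b) <-> Rbar_le b a.
Proof. destruct a, b; simpl; split; auto; lra. Qed.

Lemma is_lub_Rbar_ex (E : Rbar -> Prop) : exists l, is_lub_Rbar E l.
Proof.
  assert (Htop : (forall b, (forall x, E x -> Rbar_le x b) -> Rbar_le PInfty b) ->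
                 exists l, is_lub_Rbar E l).
  { intros H. exists PInfty. split; [intros [] _; simpl; auto | exact H]. }
  destruct (classic (E PInfty)) as [HP|HP].
  { apply Htop. intros b Hb. exact (Hb _ HP). }
  destruct (classic (exists r, E (Fin r))) as [[r0 Hr0]|HF].
  - destruct (classic (bound (fun r => E (Fin r)))) as [HM|HM].
    + destruct (completeness (fun r => E (Fin r)) HM (ex_intro _ r0 Hr0)) as [m [Hm1 Hm2]].
      exists (Fin m). split.
      * intros [x| |] Hx; simpl; [exact (Hm1 x Hx) | exact (HP Hx) | exact I].
      * intros [y| |] Hb; simpl; auto.
        -- apply Hm2. intros x Hx. exact (Hb _ Hx).
        -- exact (Hb _ Hr0).
    + apply Htop. intros [y| |] Hb; simpl; auto.
      * apply HM. exists y. intros x Hx. exact (Hb _ Hx).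
      * exact (Hb _ Hr0).
  - exists MInfty. split; simpl; auto.
    intros [x| |] Hx; simpl; auto. apply HF; eauto.
Qed.

Lemma is_glb_Rbar_ex (E : Rbar -> Prop) : exists l, is_glb_Rbar E l.
Proof.
  destruct (is_lub_Rbar_ex (fun x => E (Rbar_opp x))) as [l [Hub Hleast]].
  exists (Rbar_opp l). split.
  - intros x Hx. rewrite <- (Rbar_opp_involutive x). apply Rbar_opp_le, Hub.
    rewrite Rbar_opp_involutive. exact Hx.
  - intros b Hb. rewrite <- (Rbar_opp_involutive b). apply Rbar_opp_le, Hleast.
    intros y Hy. rewrite <- (Rbar_opp_involutive y). apply Rbar_opp_le, Hb, Hy.
Qed.

Lemma Rbar_sup_correct E : is_lub_Rbar E (Rbar_sup E).
Proof. unfold Rbar_sup. apply epsilon_spec, is_lub_Rbar_ex. Qed.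

Lemma Rbar_inf_correct E : is_glb_Rbar E (Rbar_inf E).
Proof. unfold Rbar_inf. apply epsilon_spec, is_glb_Rbar_ex. Qed.

Lemma Rbar_sup_gt E a : Rbar_lt a (Rbar_sup E) -> exists v, E v /\ Rbar_lt a v.
Proof.
  intros H. apply NNPP; intro Hn. apply (Rbar_lt_not_le _ _ H).
  apply (proj2 (Rbar_sup_correct E)). intros x Hx.
  apply Rbar_not_lt_le. intro; apply Hn; eauto.
Qed.

Lemma Rbar_inf_gt0 E : Rbar_lt (Fin 0) (Rbar_inf E) ->
  exists c, c > 0 /\ forall w, E w -> Rbar_le (Fin c) w.
Proof.
  intros [H Hne]. destruct (Rbar_inf_correct E) as [Hlow _].
  destruct (Rbar_inf E) as [r| |]; simpl in *.
  - exists r. split; [destruct H; auto; subst; contradiction | exact Hlow].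
  - exists 1. split; [lra|]. intros w Hw. specialize (Hlow _ Hw).
    destruct w; simpl in *; auto; contradiction.
  - contradiction.
Qed.

Definition strictly_increasing (phi : nat -> nat) : Prop := forall k, (phi k < phi (S k))%nat.

Lemma strictly_increasing_lt phi :
  strictly_increasing phi -> forall a b, (a < b)%nat -> (phi a < phi b)%nat.
Proof. intros H a b Hab. induction Hab; [apply H|]. specialize (H m). lia. Qed.

Lemma strictly_increasing_ge phi : strictly_increasing phi -> forall k, (k <= phi k)%nat.
Proof. intros H k. induction k; [lia|]. specialize (H k). lia. Qed.

Lemma strictly_increasing_comp phi psi :
  strictly_increasing phi -> strictly_increasing psi -> strictly_increasing (fun k => phi (psi k)).
Proof. intros H1 H2 k. apply strictly_increasing_lt; auto. Qed.

Lemma Un_cv_extract u l phi : strictly_increasing phi -> Un_cv u l -> Un_cv (fun k => u (phi k)) l.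
Proof.
  intros Hp Hu e He. destruct (Hu e He) as [N HN]. exists N. intros k Hk.
  apply HN. pose proof (strictly_increasing_ge phi Hp k). lia.
Qed.

Lemma inv_INR_S_pos k : 0 < / INR (S k).
Proof. apply Rinv_0_lt_compat, lt_0_INR; lia. Qed.

Lemma inv_INR_S_le m k : (m <= k)%nat -> / INR (S k) <= / INR (S m).
Proof. intros H. apply Rinv_le_contravar; [apply lt_0_INR; lia | apply le_INR; lia]. Qed.

Lemma inv_INR_S_lt eps : eps > 0 -> exists N, / INR (S N) < eps.
Proof.
  intros He. destruct (archimed_cor1 eps He) as [N [HN HN0]]. exists N.
  assert (/ INR (S N) <= / INR N).
  { apply Rinv_le_contravar; [apply lt_0_INR; lia | apply le_INR; lia]. }
  lra.
Qed.

Lemma Un_cv_bounded_extract (u : nat -> R) M : (forall k, Rabs (u k) <= M) ->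
  exists phi l, strictly_increasing phi /\ Un_cv (fun k => u (phi k)) l.
Proof.
  intros HM.
  destruct (Bolzano_Weierstrass u (fun c => -M <= c <= M) (compact_P3 _ _)) as [l Hl].
  { intros k. specialize (HM k). revert HM. unfold Rabs; destruct Rcase_abs; intros; lra. }
  assert (Hnear : forall Nj : nat * nat, exists p,
             (fst Nj <= p)%nat /\ Rabs (u p - l) < / INR (S (snd Nj))).
  { intros [N j]. pose (e := mkposreal _ (inv_INR_S_pos j)).
    destruct (Hl (disc l e) N) as [p Hp]; [exists e; intros x Hx; exact Hx|].
    exists p. exact Hp. }
  destruct (choice _ Hnear) as [g Hg].
  pose (phi := nat_rect (fun _ => nat) (g (0, 0)%nat) (fun j pj => g (S pj, S j))).
  assert (Hdist : forall j, Rabs (u (phi j) - l) < / INR (S j)).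
  { intros [|j]; [apply (Hg (0, 0)%nat) | apply (Hg (S (phi j), S j))]. }
  exists phi, l. split.
  - intros k. destruct (Hg (S (phi k), S k)) as [Hk _]. simpl in *. lia.
  - intros e He. destruct (inv_INR_S_lt e He) as [N HN]. exists N. intros k Hk.
    unfold R_dist. pose proof (inv_INR_S_le N k Hk). pose proof (Hdist k). lra.
Qed.

Lemma vec_bounded_extract n (u : nat -> vec n) : (forall k i, Rabs (u k i) <= 1) ->
  exists phi (l : vec n), strictly_increasing phi /\ forall i, Un_cv (fun k => u (phi k) i) (l i).
Proof.
  revert u; induction n as [|n IH]; intros u Hu.
  - exists (fun k => k), vzero. split; [intros k; lia | intros i; apply Fin.case0, i].
  - destruct (IH (fun k i => u k (Fin.FS i))) as [phi1 [l1 [Hp1 Hl1]]]; [intros; apply Hu|].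
    destruct (Un_cv_bounded_extract (fun k => u (phi1 k) Fin.F1) 1) as [phi2 [l0 [Hp2 Hl0]]];
      [intros; apply Hu|].
    exists (fun k => phi1 (phi2 k)), (fun i => Fin.caseS' i (fun _ => R) l0 l1). split.
    + apply strictly_increasing_comp; auto.
    + intros i. apply (Fin.caseS' i); [exact Hl0|].
      intros p. apply (Un_cv_extract (fun k => u (phi1 k) (Fin.FS p))); auto.
Qed.

Lemma unit_sphere_cluster n (u : nat -> vec n) : (forall k, unit_sphere (u k)) ->
  exists h, unit_sphere h /\
    forall eps N, eps > 0 -> exists k, (N <= k)%nat /\ norm (vsub (u k) h) < eps.
Proof.
  intros Hu.
  assert (Hinner : forall k, inner (u k) (u k) = 1).
  { intros k. rewrite <- norm_pow2, (Hu k). ring. }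
  destruct (vec_bounded_extract n u) as [phi [h [Hphi Hcv]]].
  { intros k i. pose proof (coord_sq_le_inner n (u k) i). rewrite Hinner in H.
    apply Rabs_le. nra. }
  assert (Hhh : inner h h = 1).
  { apply (UL_sequence (fun k => inner (u (phi k)) (u (phi k)))).
    - apply (Un_cv_fsum n (fun k i => u (phi k) i * u (phi k) i) (fun i => h i * h i)).
      intros i. apply CV_mult; apply Hcv.
    - eapply Un_cv_ext; [|apply (Un_cv_const 1)]. intros k. simpl. rewrite Hinner. reflexivity. }
  assert (Hdist : Un_cv (fun k => inner (vsub (u (phi k)) h) (vsub (u (phi k)) h)) 0).
  { rewrite <- (fsum_0 n).
    apply (Un_cv_fsum n (fun k i => (u (phi k) i - h i) * (u (phi k) i - h i)) (fun _ => 0)).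
    intros i. replace 0 with ((h i - h i) * (h i - h i)) by ring.
    apply CV_mult; apply CV_minus; auto; apply Un_cv_const. }
  exists h. split.
  { unfold unit_sphere, norm. rewrite Hhh. apply sqrt_1. }
  intros eps N Heps. destruct (Hdist (eps ^ 2) ltac:(apply pow_lt; lra)) as [K HK].
  exists (phi (max N K)). split.
  - pose proof (strictly_increasing_ge phi Hphi (max N K)). lia.
  - apply norm_lt_iff; [lra|]. specialize (HK (max N K) ltac:(lia)).
    unfold R_dist in HK. rewrite Rminus_0_r in HK.
    eapply Rle_lt_trans; [apply Rle_abs | exact HK].
Qed.

Lemma lower_sod_ge_window n (f : vec n -> Rbar) xb p h c :
  (exists d, d > 0 /\ forall t h', 0 < t < d -> norm (vsub h' h) < d ->
                       Rbar_le (Fin c) (Delta2 f xb p t h')) ->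
  Rbar_le (Fin c) (lower_sod f xb p h).
Proof.
  intros [d [Hd Hwin]].
  set (T := fun w => exists t h', 0 < t < d /\ norm (vsub h' h) < d /\ w = Delta2 f xb p t h').
  apply Rbar_le_trans with (Rbar_inf T).
  - apply (proj2 (Rbar_inf_correct T)). intros w [t [h' [Ht [Hh' ->]]]]. auto.
  - apply (proj1 (Rbar_sup_correct _)). exists d. split; auto.
Qed.

Lemma lower_sod_gt0_window n (f : vec n -> Rbar) xb p h :
  Rbar_lt (Fin 0) (lower_sod f xb p h) ->
  exists d c, d > 0 /\ c > 0 /\ forall t h', 0 < t < d -> norm (vsub h' h) < d ->
                                  Rbar_le (Fin c) (Delta2 f xb p t h').
Proof.
  intros H. destruct (Rbar_sup_gt _ _ H) as [v [[d [Hd ->]] Hv]].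
  destruct (Rbar_inf_gt0 _ Hv) as [c [Hc Hlow]].
  exists d, c. repeat split; auto. intros t h' Ht Hh'. apply Hlow. exists t, h'. auto.
Qed.

Lemma Fin_le_Delta2 n (f : vec n -> Rbar) xb r0 t u c : f xb = Fin r0 -> 0 < t ->
  Rbar_le (Fin c) (Delta2 f xb vzero t u) <->
  Rbar_le (Fin (r0 + c / 2 * t ^ 2)) (f (vadd xb (vscal t u))).
Proof.
  intros Hr0 Ht. unfold Delta2. rewrite Hr0, inner_vzero_l. simpl real.
  destruct (f (vadd xb (vscal t u))) as [r| |]; cbn [Rbar_le Rbar_mulR Rbar_addR]; try tauto.
  assert (E : / (t ^ 2 / 2) * (r + (- r0 - t * 0)) * (t ^ 2 / 2) = r - r0) by (field; lra).
  replace (c / 2 * t ^ 2) with (c * (t ^ 2 / 2)) by field.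
  assert (HK : 0 < t ^ 2 / 2) by nra.
  revert E HK. generalize (/ (t ^ 2 / 2) * (r + (- r0 - t * 0))), (t ^ 2 / 2). intros q K E HK.
  split; intros; nra.
Qed.

Lemma prox_subdiff_0_of_strict_min n (f : vec n -> Rbar) xb :
  in_dom f xb -> strict_local_min_order2 f xb -> prox_subdiff f xb vzero.
Proof.
  intros Hdom [beta [d [Hb [Hd Hmin]]]]. split; auto. exists 1, d. repeat split; try lra; auto.
  intros y Hy. apply Rbar_le_trans with (2 := Hmin y Hy). simpl. rewrite inner_vzero_l.
  pose proof (norm_ge0 n (vsub y xb)). nra.
Qed.

Lemma uniform_sod_ge_of_strict_min n (f : vec n -> Rbar) xb :
  in_dom f xb -> strict_local_min_order2 f xb ->
  exists beta, beta > 0 /\ uniform_sod_ge f xb vzero beta unit_sphere.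
Proof.
  intros [r0 Hr0] [beta [d0 [Hb [Hd0 Hmin]]]]. exists beta. split; auto. intros eps He.
  set (d := Rmin (1/2) (Rmin (eps / (2 * beta)) (d0 / 2))).
  assert (Hd1 : d <= 1/2) by apply Rmin_l.
  assert (Hd2 : d <= eps / (2 * beta)) by (eapply Rle_trans; [apply Rmin_r | apply Rmin_l]).
  assert (Hd3 : d <= d0 / 2) by (eapply Rle_trans; [apply Rmin_r | apply Rmin_r]).
  assert (Hd : d > 0).
  { assert (eps / (2 * beta) > 0) by (apply Rdiv_lt_0_compat; lra).
    unfold d. repeat apply Rmin_glb_lt; lra. }
  assert (Hdb : 2 * beta * d <= eps).
  { apply Rmult_le_compat_l with (r := 2 * beta) in Hd2; [|lra].
    replace (2 * beta * (eps / (2 * beta))) with eps in Hd2 by (field; lra). lra. }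
  exists d. split; auto. clearbody d. intros t h Ht [a [b [Ha [Hbn ->]]]].
  set (v := vadd a (vscal d b)).
  destruct (inner_near_unit_sphere n a b d Ha Hbn ltac:(lra)) as [Hlo Hup]. fold v in Hlo, Hup.
  apply (Fin_le_Delta2 n f xb r0); [auto | lra|].
  assert (Hx : norm (vsub (vadd xb (vscal t v)) xb) < d0).
  { rewrite vsub_vadd_vscal. apply norm_lt_iff; [lra|]. rewrite inner_vscal. nra. }
  eapply Rbar_le_trans; [|apply (Hmin _ Hx)].
  rewrite Hr0, vsub_vadd_vscal, norm_pow2, inner_vscal. cbn [Rbar_le real].
  assert (Hv : beta - eps <= beta * inner v v).
  { assert (0 <= beta * (inner v v - (1 - d) ^ 2)) by (apply Rmult_le_pos; lra). nra. }
  assert (0 <= t ^ 2 / 2) by nra.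
  assert (Hswap : beta / 2 * (t ^ 2 * inner v v) = t ^ 2 / 2 * (beta * inner v v)) by field.
  rewrite Hswap. apply Rplus_le_compat_l. nra.
Qed.

Lemma lower_sod_ge_of_uniform n (f : vec n -> Rbar) xb p beta (A : vec n -> Prop) :
  uniform_sod_ge f xb p beta A -> forall h, A h -> Rbar_le (Fin beta) (lower_sod f xb p h).
Proof.
  intros Hu h Hh. apply Rbar_le_Fin_eps. intros eps He.
  destruct (Hu eps He) as [d [Hd Hwin]].
  apply lower_sod_ge_window. exists d. split; auto. intros t h' Ht Hh'. apply Hwin; auto.
  exists h, (vscal (/ d) (vsub h' h)). repeat split; auto.
  - rewrite norm_vscal, Rabs_inv, Rabs_pos_eq by lra.
    apply Rmult_le_reg_l with d; [lra|]. field_simplify; lra.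
  - apply functional_extensionality; intros i. unfold vadd, vscal, vsub. field. lra.
Qed.

Lemma strict_min_of_Delta2_ge n (f : vec n -> Rbar) xb r0 beta : f xb = Fin r0 -> beta > 0 ->
  (forall t h, 0 < t < beta -> unit_sphere h -> Rbar_le (Fin beta) (Delta2 f xb vzero t h)) ->
  strict_local_min_order2 f xb.
Proof.
  intros Hr0 Hb HD. exists beta, beta. repeat split; auto. intros x Hx.
  rewrite Hr0. simpl real.
  destruct (Req_dec (norm (vsub x xb)) 0) as [H0|H0].
  - rewrite H0. apply norm_vsub_eq0 in H0. subst x. rewrite Hr0. simpl. lra.
  - set (t := norm (vsub x xb)) in *.
    assert (Ht : 0 < t) by (pose proof (norm_ge0 n (vsub x xb)); unfold t in *; lra).
    set (h := vscal (/ t) (vsub x xb)).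
    assert (Hxh : vadd xb (vscal t h) = x).
    { apply functional_extensionality; intros i. unfold h, vadd, vscal, vsub. field. lra. }
    assert (Hh : unit_sphere h).
    { unfold unit_sphere, h. rewrite norm_vscal, Rabs_inv, Rabs_pos_eq by lra.
      fold t. field. lra. }
    rewrite <- Hxh. apply (Fin_le_Delta2 n f xb r0); auto.
Qed.

Lemma strict_min_of_lower_sod_pos n (f : vec n -> Rbar) xb : in_dom f xb ->
  (forall h, unit_sphere h -> Rbar_lt (Fin 0) (lower_sod f xb vzero h)) ->
  strict_local_min_order2 f xb.
Proof.
  intros [r0 Hr0] Hpos. apply NNPP; intro Hnot.
  assert (Hbad : forall k, exists th : R * vec n,
    0 < fst th < / INR (S k) /\ unit_sphere (snd th) /\
    ~ Rbar_le (Fin (/ INR (S k))) (Delta2 f xb vzero (fst th) (snd th))).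
  { intros k. apply NNPP; intro Hk. apply Hnot.
    apply (strict_min_of_Delta2_ge n f xb r0 (/ INR (S k))); auto; [apply inv_INR_S_pos|].
    intros t h Ht Hh. apply NNPP; intro Hle. apply Hk. exists (t, h). auto. }
  destruct (choice _ Hbad) as [th Hth].
  destruct (unit_sphere_cluster n (fun k => snd (th k))) as [h [Hh Hcl]]; [apply Hth|].
  destruct (lower_sod_gt0_window n f xb vzero h (Hpos h Hh)) as [d [c [Hd [Hc Hwin]]]].
  destruct (inv_INR_S_lt (Rmin d c)) as [N HN]; [apply Rmin_glb_lt; lra|].
  destruct (Hcl d N Hd) as [k [HNk Hk]].
  destruct (Hth k) as [Ht [_ Hnle]].
  pose proof (inv_INR_S_le N k HNk). pose proof (Rmin_l d c). pose proof (Rmin_r d c).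
  apply Hnle. apply Rbar_le_trans with (Fin c); [cbn [Rbar_le]; lra|]. apply Hwin; [lra | exact Hk].
Qed.

Theorem corollary5p1 (n : nat) (f : vec n -> Rbar) (xb : vec n)
  (Hprop : proper f) (Hlsc : lsc f) (Hdom : in_dom f xb) :
  let i := strict_local_min_order2 f xb in
  let ii := prox_subdiff f xb vzero /\
            exists beta, beta > 0 /\ uniform_sod_ge f xb vzero beta unit_sphere in
  let iii := prox_subdiff f xb vzero /\
            exists beta, beta > 0 /\
              forall h, unit_sphere h -> Rbar_le (Fin beta) (lower_sod f xb vzero h) in
  let iv := prox_subdiff f xb vzero /\
              forall h, unit_sphere h -> Rbar_lt (Fin 0) (lower_sod f xb vzero h) in
  (i <-> ii) /\ (i <-> iii) /\ (i <-> iv).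
Proof.
  intros i ii iii iv.
  assert (i_ii : i -> ii).
  { intros Hmin. split.
    - now apply prox_subdiff_0_of_strict_min.
    - now apply uniform_sod_ge_of_strict_min. }
  assert (ii_iii : ii -> iii).
  { intros [Hp [beta [Hb Hu]]]. split; [exact Hp|]. exists beta. split; [exact Hb|].
    exact (lower_sod_ge_of_uniform n f xb vzero beta unit_sphere Hu). }
  assert (iii_iv : iii -> iv).
  { intros [Hp [beta [Hb Hl]]]. split; [exact Hp|].
    intros h Hh. apply (Rbar_lt_Fin_le 0 beta); auto. }
  assert (iv_i : iv -> i).
  { intros [_ Hl]. now apply strict_min_of_lower_sod_pos. }
  tauto.
Qed.
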